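(* Let $0\le r\le n$, let $A\in\mathcal{A}_{n+1,r+1}$, and let $\mathcal{T}$ be an arbitrary tiling of $\Gamma(X(A))$. Then the fusion-exchange algorithm produces a tableau $T(A)$, a filling of the tiles of $\mathcal{T}$ with $\alpha$'s, $\beta$'s and $q$'s (some tiles possibly empty), such that: (i) every tile in the same north-strip as, and above, a tile containing $\alpha$ is empty; (ii) every tile in the same west-strip as, and to the left of, a tile containing $\beta$ is empty; (iii) every tile that is not forced to be empty by (i) or (ii) contains an $\alpha$, a $\beta$ or a $q$.
   Context: Words and diagrams. For $0\le r\le n$ let $B_n^r$ be the set of words $X\in\{H,L,0\}^n$ with exactly $r$ letters $L$. If $X$ has $k$ letters $H$, $r$ letters $L$ and $\ell$ letters $0$, its rhombic diagram $\Gamma(X)$ is the closed region bounded by two paths of unit steps, using the directions west (horizontal), south (vertical) and southwest (diagonal: a fixed unit vector strictly between west and south), both going from a point $P$ to a point $Q$: the northwest boundary consists of $\ell$ west steps, then $r$ southwest steps, then $k$ south steps; the southeast boundary is obtained by reading $X$ left to right and taking a west step for each $0$, a southwest step for each $L$, a south step for each $H$. A tiling of $\Gamma(X)$ is a tiling by unit rhombi of three kinds: squares (horizontal and vertical edges), tall rhombi (vertical and diagonal edges), short rhombi (horizontal and diagonal edges). A west-strip (resp. north-strip, northwest-strip) is a maximal set of tiles connected through shared vertical (resp. horizontal, diagonal) edges; each runs from an edge of the southeast boundary to an edge of the northwest boundary. Each tile has two edges on its lower-right side: its east edge (vertical for squares and tall rhombi, diagonal for short rhombi) and its south edge (horizontal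 for squares and short rhombi, diagonal for tall rhombi); the parallel edges on its upper-left side are its west and north edges. Assemblées. An assemblée of size $(m,s)$ is a collection of $s$ nonempty, pairwise disjoint, linearly ordered sets (blocks) with union $\{1,\dots,m\}$; the last element of a block is its block-end. Blocks are listed in the canonical order with decreasing block-ends, and the assemblée is identified with the concatenated word. $\mathcal{A}_{m,s}$ is the set of these. For $A\in\mathcal{A}_{n+1,r+1}$ with block-ends $b_1>\dots>b_{r+1}$, a non-block-end element $x$ is an increase if $x+1$ appears to the right of $x$ in $A$, and a decrease otherwise (so $n+1$, if not a block-end, is a decrease). $X(A)\in B_n^r$ is obtained from $A$ by deleting its last letter $b_{r+1}$ and replacing each increase by $H$, each decrease by $0$ and each remaining block-end by $L$. Fusion-exchange algorithm. A label is a finite, possibly empty, set of consecutive integers; for labels $E,S$ write $E\succ S$ if both are nonempty and $\min E=\max S+1$. Given $A\in\mathcal{A}_{n+1,r+1}$ and a tiling of $\Gamma(X(A))$: initially the southeast boundary edges, in order from $P$ to $Q$, receive the singleton labels of the letters of $A$ from left to right, $b_{r+1}$ omitted. Step: choose a tile whose east and south edges are labeled, say by $E$ and $S$, and whose west and north edges are not. (R I) If $E\succ S$ and the south edge is horizontal: west edge gets $E\cup S$, north edge gets $\emptyset$, place $\alpha$ in the tile. (R II) If $S\succ E$ and the east edge is vertical: north edge gets $E\cup S$, west edge gets $\emptyset$, place $\beta$. (R III) Otherwise: west edge gets $E$, north edge gets $S$, and place $q$ if $E\ne\emptyset$ and $S\ne\emptyset$ (else leave the tile empty). Repeat until every edge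 is labeled; $T(A)$ is the resulting filling. *)

From HB Require Import structures.
From mathcomp Require Import all_boot.
Set Implicit Arguments. Unset Strict Implicit. Unset Printing Implicit Defensive.

(* Letters of words in {H, L, 0}.  Z stands for the letter 0.          *)
(* H <-> south (vertical) step, L <-> southwest (diagonal), Z <-> west *)
Inductive letter := H | L | Z.

Definition letter_eqb (a b : letter) : bool :=
  match a, b with H, H | L, L | Z, Z => true | _, _ => false end.
Lemma letter_eqP : Equality.axiom letter_eqb.
Proof. by case; case; constructor. Qed.
HB.instance Definition _ := hasDecEq.Build letter letter_eqP.

(* Assemblees.  An assemblee of size (m,s) in canonical order is a list *)
(* of s nonempty blocks (each block a linearly ordered list), whose    *)
(* concatenation is a permutation of 1..m, listed by strictly          *)
(* decreasing block-ends (last elements).                              *)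
Definition assemblee (m s : nat) (B : seq (seq nat)) : Prop :=
  [/\ size B = s,
      all (fun b => b != [::]) B,
      perm_eq (flatten B) (iota 1 m)
    & sorted (fun b c => last 0 c < last 0 b) B].

Definition aword (B : seq (seq nat)) : seq nat := flatten B.

Definition is_blockend (B : seq (seq nat)) (x : nat) : bool :=
  x \in map (last 0) B.

Definition is_increase (B : seq (seq nat)) (x : nat) : bool :=
  ~~ is_blockend B x && (x.+1 \in drop (index x (aword B)).+1 (aword B)).

Definition letter_of (B : seq (seq nat)) (x : nat) : letter :=
  if is_blockend B x then L else if is_increase B x then H else Z.

Definition aword_trunc (B : seq (seq nat)) : seq nat :=
  take (size (aword B)).-1 (aword B).

Definition XA (B : seq (seq nat)) : seq letter := map (letter_of B) (aword_trunc B).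

(* Labels: finite, possibly empty, sets of consecutive integers.        *)
(* None is the empty label; Some (a, b) is the set {a, a+1, ..., b}.    *)
Definition label := option (nat * nat).

(* E > S : both nonempty and min E = max S + 1 *)
Definition lab_succ (E S : label) : bool :=
  match E, S with
  | Some (a, _), Some (_, b) => a == b.+1
  | _, _ => false
  end.

(* E \cup S, used only when E > S (or S > E, by symmetry) *)
Definition lab_union (E S : label) : label :=
  match E, S with
  | Some (a1, b1), Some (a2, b2) => Some (minn a1 a2, maxn b1 b2)
  | Some _, None => E
  | None, _ => S
  end.

Definition lab_nonempty (E : label) : bool := if E is Some _ then true else false.

(* Tilings as flip sequences.                                          *)
(* The current boundary path from P to Q is a list of edges; each edge *)
(* has a direction (letter), the index of the strip it belongs to      *)
(* (= the position on the southeast boundary where that strip starts)   *)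
(* and a label (None also used for "empty label").                     *)
(* A tile is glued on the upper-left of two consecutive edges i, i+1 of *)
(* the current path: edge i is its east edge, edge i+1 its south edge.  *)
(* Square: (east,south) = (H,Z); tall rhombus: (H,L); short rhombus:   *)
(* (L,Z).  After gluing, edge i is replaced by the north edge (parallel *)
(* to the south edge) and edge i+1 by the west edge (parallel to the   *)
(* east edge).                                                          *)
Record edge := Edge { e_let : letter; e_id : nat; e_lab : label }.

Inductive content := Alpha | Beta | Qq | Empty.
Definition content_eqb (a b : content) : bool :=
  match a, b with
  | Alpha, Alpha | Beta, Beta | Qq, Qq | Empty, Empty => true | _, _ => false end.
Lemma content_eqP : Equality.axiom content_eqb.
Proof. by case; case; constructor. Qed.
HB.instance Definition _ := hasDecEq.Build content content_eqP.

Record tile := Tile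
  { t_elet : letter; t_eid : nat; t_slet : letter; t_sid : nat; t_cont : content }.

Definition valid_tile (e s : letter) : bool :=
  match e, s with H, Z | H, L | L, Z => true | _, _ => false end.

Definition dummy_edge := Edge Z 0 None.

Definition fe_step (st : seq edge) (i : nat) : option (tile * seq edge) :=
  let e := nth dummy_edge st i in
  let s := nth dummy_edge st i.+1 in
  if (i.+1 < size st) && valid_tile (e_let e) (e_let s) then
    let E := e_lab e in let S := e_lab s in
    let '(c, north, west) :=
      if lab_succ E S && (e_let s == Z) then
        (Alpha, None, lab_union E S)
      else if lab_succ S E && (e_let e == H) then
        (Beta, lab_union E S, None)
      else
        ((if lab_nonempty E && lab_nonempty S then Qq else Empty), S, E) in
    Some (Tile (e_let e) (e_id e) (e_let s) (e_id s) c,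
          take i st ++ [:: Edge (e_let s) (e_id s) north;
                           Edge (e_let e) (e_id e) west] ++ drop i.+2 st)
  else None.

Fixpoint fe_run (st : seq edge) (ps : seq nat) : option (seq tile * seq edge) :=
  match ps with
  | [::] => Some ([::], st)
  | i :: ps' =>
      match fe_step st i with
      | None => None
      | Some (t, st') =>
          match fe_run st' ps' with
          | None => None
          | Some (ts, fin) => Some (t :: ts, fin)
          end
      end
  end.

(* Initial labelling of the southeast boundary of Gamma(X(A)). *)
Definition init_path (B : seq (seq nat)) : seq edge :=
  [seq Edge (nth Z (XA B) k) k
        (Some (nth 0 (aword_trunc B) k, nth 0 (aword_trunc B) k))
  | k <- iota 0 (size (aword_trunc B))].

(* The northwest boundary word 0^l L^r H^k of Gamma(X). *)
Definition nw_word (X : seq letter) : seq letter :=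
  nseq (count_mem Z X) Z ++ nseq (count_mem L X) L ++ nseq (count_mem H X) H.

(* ps encodes a tiling of Gamma(X(A)) (together with an order of        *)
(* processing its tiles), and ts is the resulting filling T(A).         *)
Definition fe_tableau (B : seq (seq nat)) (ps : seq nat) (ts : seq tile) : Prop :=
  exists fin, fe_run (init_path B) ps = Some (ts, fin) /\
              map e_let fin = nw_word (XA B).

(* Strips of a tile: its north-strip is the strip of its horizontal    *)
(* (south/north) edges, its west-strip that of its vertical (east/west) *)
(* edges, if any. *)
Definition north_strip (t : tile) : option nat :=
  if t_slet t == Z then Some (t_sid t) else None.
Definition west_strip (t : tile) : option nat :=
  if t_elet t == H then Some (t_eid t) else None.

(* Tile k is forced empty by (i): it is in the same north-strip as, and *)
(* above, a tile containing alpha.  Along a strip, tiles are placed in  *)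
(* order away from the southeast boundary, so "above" = placed later.   *)
Definition forced_by_alpha (ts : seq tile) (k : nat) : Prop :=
  exists2 k', k' < k &
    [/\ t_cont (nth (Tile Z 0 Z 0 Empty) ts k') = Alpha,
        north_strip (nth (Tile Z 0 Z 0 Empty) ts k') != None
      & north_strip (nth (Tile Z 0 Z 0 Empty) ts k) =
        north_strip (nth (Tile Z 0 Z 0 Empty) ts k')].

Definition forced_by_beta (ts : seq tile) (k : nat) : Prop :=
  exists2 k', k' < k &
    [/\ t_cont (nth (Tile Z 0 Z 0 Empty) ts k') = Beta,
        west_strip (nth (Tile Z 0 Z 0 Empty) ts k') != None
      & west_strip (nth (Tile Z 0 Z 0 Empty) ts k) =
        west_strip (nth (Tile Z 0 Z 0 Empty) ts k')].

Definition tile_at (ts : seq tile) (k : nat) : tile := nth (Tile Z 0 Z 0 Empty) ts k.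

(** During the algorithm, a boundary edge carries the empty label exactly when
    its strip has already been closed: a horizontal strip by an [α] tile, a
    vertical one by a [β] tile.  Rule I gives the north edge of its [α] tile the
    empty label and its west edge a nonempty one, rule II is symmetric, and
    rule III only transports labels; since every strip has exactly one edge on
    the current boundary, no other edge is affected.  A tile is therefore empty
    exactly when rule III meets an empty label, i.e. when its south or east
    strip is already closed, which is (i)-(iii).  Only the distinct strip
    indices and the nonempty initial labels are used, not the hypotheses on
    [A] or the shape of the tiling. *)

From mathcomp Require Import all_boot.
Set Implicit Arguments. Unset Strict Implicit.

(* Keying strips by direction as well as index spares an invariant saying
   that all edges of a strip are parallel. *)
Definition closes (t : tile) : option (letter * nat) :=
  match t_cont t with
  | Alpha => omap (pair Z) (north_strip t)
  | Beta => omap (pair H) (west_strip t)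
  | _ => None
  end.

Definition closed (pre : seq tile) (k : letter * nat) : bool :=
  has (fun t => closes t == Some k) pre.

Lemma closed_rcons pre t k :
  closed (rcons pre t) k = (closes t == Some k) || closed pre k.
Proof. by rewrite /closed has_rcons. Qed.

Lemma closes_id t k : closes t = Some k -> k.2 = t_sid t \/ k.2 = t_eid t.
Proof.
rewrite /closes /north_strip /west_strip.
by case: t_cont => //; case: ifP => // _ [<-]; [left | right].
Qed.

Definition edge_strip (e : edge) : letter * nat := (e_let e, e_id e).
Definition tile_south (t : tile) : letter * nat := (t_slet t, t_sid t).
Definition tile_east (t : tile) : letter * nat := (t_elet t, t_eid t).

Definition edge_ok (pre : seq tile) (e : edge) : bool :=
  lab_nonempty (e_lab e) == ~~ closed pre (edge_strip e).

Definition path_ok (pre : seq tile) (st : seq edge) : bool :=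
  uniq (map e_id st) && all (edge_ok pre) st.

Definition tile_ok (pre : seq tile) (t : tile) : bool :=
  (t_cont t == Empty) == closed pre (tile_south t) || closed pre (tile_east t).

Lemma edge_ok_rcons pre t e : e_id e != t_sid t -> e_id e != t_eid t ->
  edge_ok (rcons pre t) e = edge_ok pre e.
Proof.
move=> hs he; rewrite /edge_ok closed_rcons.
case hk: (closes t == Some (edge_strip e)) => //.
by move/eqP: hk => /closes_id [] /= h; [move: hs | move: he]; rewrite h eqxx.
Qed.

Definition fe_rule (le ls : letter) (E S : label) : content * label * label :=
  if lab_succ E S && (ls == Z) then (Alpha, None, lab_union E S)
  else if lab_succ S E && (le == H) then (Beta, lab_union E S, None)
  else ((if lab_nonempty E && lab_nonempty S then Qq else Empty), S, E).

Lemma lab_succ_nonempty E S : lab_succ E S -> lab_nonempty E && lab_nonempty S.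
Proof. by case: E => [[]|]; case: S => [[]|]. Qed.

Lemma lab_union_nonemptyl E S : lab_nonempty E -> lab_nonempty (lab_union E S).
Proof. by case: E => [[]|]; case: S => [[]|]. Qed.

Lemma lab_union_nonemptyr E S : lab_nonempty S -> lab_nonempty (lab_union E S).
Proof. by case: E => [[]|]; case: S => [[]|]. Qed.

Lemma fe_rule_ok pre le ide ls ids E S :
  ide != ids -> edge_ok pre (Edge le ide E) -> edge_ok pre (Edge ls ids S) ->
  let: (c, north, west) := fe_rule le ls E S in
  let t := Tile le ide ls ids c in
  [&& edge_ok (rcons pre t) (Edge ls ids north),
      edge_ok (rcons pre t) (Edge le ide west) & tile_ok pre t].
Proof.
rewrite /edge_ok /edge_strip /= => neq /eqP hE /eqP hS.
have {hE} cE : closed pre (le, ide) = ~~ lab_nonempty E by rewrite hE negbK.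
have {hS} cS : closed pre (ls, ids) = ~~ lab_nonempty S by rewrite hS negbK.
have not_both k : (Some (ls, ids) == Some k) && (Some (le, ide) == Some k) = false.
  by apply/negP => /andP[/eqP <- /eqP [_ eq_ids]]; rewrite eq_ids eqxx in neq.
rewrite /fe_rule; case: ifP => [/andP[hES /eqP lsZ] | _];
  last case: ifP => [/andP[hES /eqP leH] | _];
  rewrite /tile_ok /tile_south /tile_east /= !closed_rcons cE cS;
  rewrite /closes /north_strip /west_strip /=.
- have /andP[nE nS] := lab_succ_nonempty hES.
  move: (not_both (le, ide)).
  by rewrite nE nS lab_union_nonemptyl // lsZ /= !eqxx /= ?andbT => ->.
- have /andP[nS nE] := lab_succ_nonempty hES.
  move: (not_both (ls, ids)).
  by rewrite nE nS lab_union_nonemptyr // leH /= !eqxx /= ?andbT => ->.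
- by case: (lab_nonempty E); case: (lab_nonempty S).
Qed.

Lemma uniq_cat_swap (T : eqType) (a b : seq T) x y :
  uniq (a ++ x :: y :: b) = uniq (a ++ y :: x :: b).
Proof. by apply: perm_uniq; rewrite perm_cat2l (permEl (perm_catCA [:: x] [:: y] b)). Qed.

Lemma cat_take_nth_drop2 (T : Type) (x0 : T) (s : seq T) i : i.+1 < size s ->
  s = take i s ++ nth x0 s i :: nth x0 s i.+1 :: drop i.+2 s.
Proof.
move=> hi; rewrite -[s in LHS](cat_take_drop i).
by rewrite (drop_nth x0 (ltnW hi)) (drop_nth x0 hi).
Qed.

Lemma all_edge_ok_rcons pre t s :
  t_sid t \notin map e_id s -> t_eid t \notin map e_id s ->
  all (edge_ok (rcons pre t)) s = all (edge_ok pre) s.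
Proof.
elim: s => //= e s IH; rewrite !inE !negb_or => /andP[hs ns] /andP[he ne].
by rewrite IH // edge_ok_rcons // eq_sym.
Qed.

Lemma fe_step_ok pre st i t st' : path_ok pre st -> fe_step st i = Some (t, st') ->
  [&& path_ok (rcons pre t) st', valid_tile (t_elet t) (t_slet t) & tile_ok pre t].
Proof.
rewrite /fe_step; case: ifP => // /andP[hi valid].
move: (cat_take_nth_drop2 dummy_edge hi) valid; set a := take i st; set b := drop i.+2 st.
case: nth => le ide E; case: nth => ls ids S /= -> valid.
rewrite -[if _ then _ else _]/(fe_rule le ls E S).
rewrite /path_ok map_cat all_cat /= => /andP[uniq_st /and4P[ok_a okE okS ok_b]].
move: (uniq_st); rewrite -[ide :: _]/([:: ide; ids] ++ _) uniq_catCA -map_cat /=.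
rewrite inE negb_or => /and3P[/andP[neq ide_ab] ids_ab _].
move: (fe_rule_ok neq okE okS).
case: fe_rule => [[c north] west] /and3P[okN okW okT] [<- <-].
move: (@all_edge_ok_rcons pre (Tile le ide ls ids c) _ ids_ab ide_ab).
rewrite !all_cat ok_a ok_b map_cat /= -uniq_cat_swap uniq_st.
by case/andP=> -> ->; rewrite okN okW valid okT.
Qed.

Lemma fe_run_ok pre st ps ts fin : path_ok pre st -> fe_run st ps = Some (ts, fin) ->
  forall k, k < size ts ->
  valid_tile (t_elet (tile_at ts k)) (t_slet (tile_at ts k)) &&
  tile_ok (pre ++ take k ts) (tile_at ts k).
Proof.
elim: ps pre st ts fin => [|i ps IH] pre st ts fin /=; first by move=> _ [<-].
case step: fe_step => [[t st']|] // ok.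
have /and3P[ok' valid tok] := fe_step_ok ok step.
case run: fe_run => [[ts' fin']|] // [<- _] [|k] /= hk; first by rewrite cats0 valid tok.
by rewrite -cat_rcons; exact: IH ok' run k hk.
Qed.

Lemma init_path_ok B : path_ok [::] (init_path B).
Proof.
by rewrite /path_ok /init_path -map_comp map_id iota_uniq all_map; apply/allP.
Qed.

Lemma valid_tile_dirs e s : valid_tile e s -> (e != Z) && (s != H).
Proof. by case: e; case: s. Qed.

Lemma has_take_nthP (T : Type) (x0 : T) (p : pred T) s k : k <= size s ->
  reflect (exists2 i, i < k & p (nth x0 s i)) (has p (take k s)).
Proof.
move=> hk; apply: (iffP (has_nthP x0)).
all: rewrite size_takel // => -[i hi hp]; exists i => //.
  by rewrite -(nth_take x0 hi).
by rewrite nth_take.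
Qed.

Lemma closes_south t t' : t_slet t != H ->
  (closes t' == Some (tile_south t)) =
  [&& t_cont t' == Alpha, north_strip t' != None & north_strip t == north_strip t'].
Proof.
rewrite /closes /north_strip /west_strip /tile_south.
case: t t' => el ei [] si c [el' ei' [] si' []] //= _; try by case: ifP.
by apply/eqP/eqP => -[->].
Qed.

Lemma closes_east t t' : t_elet t != Z ->
  (closes t' == Some (tile_east t)) =
  [&& t_cont t' == Beta, west_strip t' != None & west_strip t == west_strip t'].
Proof.
rewrite /closes /north_strip /west_strip /tile_east.
case: t t' => [[] ei sl si c] [[] ei' sl' si' []] //= _; try by case: ifP.
by apply/eqP/eqP => -[->].
Qed.

Lemma forced_by_alphaP ts k : k < size ts -> t_slet (tile_at ts k) != H ->
  reflect (forced_by_alpha ts k) (closed (take k ts) (tile_south (tile_at ts k))).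
Proof.
move=> hk hs; apply: (iffP (has_take_nthP (Tile Z 0 Z 0 Empty) _ (ltnW hk))).
  by case=> i hi; rewrite closes_south // => /and3P[/eqP hc hn /eqP hns]; exists i.
by case=> i hi [hc hn hns]; exists i; rewrite // closes_south // hc hn hns !eqxx.
Qed.

Lemma forced_by_betaP ts k : k < size ts -> t_elet (tile_at ts k) != Z ->
  reflect (forced_by_beta ts k) (closed (take k ts) (tile_east (tile_at ts k))).
Proof.
move=> hk he; apply: (iffP (has_take_nthP (Tile Z 0 Z 0 Empty) _ (ltnW hk))).
  by case=> i hi; rewrite closes_east // => /and3P[/eqP hc hn /eqP hws]; exists i.
by case=> i hi [hc hn hws]; exists i; rewrite // closes_east // hc hn hws !eqxx.
Qed.

Lemma fe_run_empty_iff_forced st ps ts fin k :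
  path_ok [::] st -> fe_run st ps = Some (ts, fin) -> k < size ts ->
  t_cont (tile_at ts k) = Empty <-> forced_by_alpha ts k \/ forced_by_beta ts k.
Proof.
move=> ok run hk; have /andP[valid /eqP empty] := fe_run_ok ok run hk.
have /andP[eZ sH] := valid_tile_dirs valid.
apply: (iff_trans (rwP eqP)); rewrite empty; apply: (iff_trans (iff_sym (rwP orP))).
by split=> -[/(forced_by_alphaP hk sH) | /(forced_by_betaP hk eZ)] h; by [left | right].
Qed.

Theorem lemma3p1 (n r : nat) (B : seq (seq nat)) (ps : seq nat) (ts : seq tile) :
  r <= n ->
  assemblee n.+1 r.+1 B ->
  fe_tableau B ps ts ->
  [/\ (forall k, k < size ts -> forced_by_alpha ts k -> t_cont (tile_at ts k) = Empty),
      (forall k, k < size ts -> forced_by_beta ts k -> t_cont (tile_at ts k) = Empty)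
    & (forall k, k < size ts -> ~ forced_by_alpha ts k -> ~ forced_by_beta ts k ->
         t_cont (tile_at ts k) <> Empty)].
Proof.
move=> _ _ [fin [run _]].
have empty_iff k (hk : k < size ts) := fe_run_empty_iff_forced (init_path_ok B) run hk.
split=> k hk.
- by move=> hA; apply/(empty_iff k hk); left.
- by move=> hB; apply/(empty_iff k hk); right.
- by move=> nA nB /(empty_iff k hk) [].
Qed.
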